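(* Let $A$ be a finite alphabet and let $w=\mu^{\omega}(a)$, where $a\in A$ and $\mu$ is an $r$-uniform morphism with $r\ge 2$ that is prolongable on $a$. Suppose $w$ is aperiodic and uniformly recurrent. Then there is a constant $c$, depending only on $w$, such that for every positive integer $k$ and every index $i\ge 0$ of $w$, there is a $k$-antipower with block length at most $ck$ starting at position $i$ of $w$.
   Context: Words are indexed from $0$; infinite words are infinite to the right. A $k$-antipower is a word that is the concatenation of $k$ pairwise distinct words (blocks) of equal length; that common length is the block length. A morphism $\mu$ of $A^{\infty}=A^*\cup A^{\omega}$ satisfies $\mu(uv)=\mu(u)\mu(v)$ for finite $u$; it is $r$-uniform if $|\mu(b)|=r$ for all $b\in A$; it is prolongable on $a$ if $\mu(a)$ begins with $a$, in which case $\mu^{\omega}(a)$ is the infinite word having every $\mu^n(a)$ as a prefix. An infinite word is aperiodic if it has no periodic suffix. An infinite word $w$ is uniformly recurrent if for every integer $a$ there is an integer $b$ such that every length-$a$ substring (factor of consecutive letters) of $w$ occurs in every length-$b$ substring of $w$. *)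

From mathcomp Require Import all_boot.
Set Implicit Arguments. Unset Strict Implicit. Unset Printing Implicit Defensive.

(* Infinite words over A are functions nat -> A (indexed from 0). *)

Definition morph_ext (A : Type) (mu : A -> seq A) (u : seq A) : seq A :=
  flatten (map mu u).

Definition morph_iter (A : Type) (mu : A -> seq A) (n : nat) (u : seq A) : seq A :=
  iter n (morph_ext mu) u.

Definition uniform_morphism (A : Type) (mu : A -> seq A) (r : nat) : Prop :=
  forall b : A, size (mu b) = r.

Definition prolongable_on (A : Type) (mu : A -> seq A) (a : A) : Prop :=
  exists s, mu a = a :: s.

(* w = mu^omega(a): the infinite word having every mu^n(a) as a prefix *)
Definition is_fixed_point_word (A : Type) (mu : A -> seq A) (a : A) (w : nat -> A) : Prop :=
  forall n i, i < size (morph_iter mu n [:: a]) -> w i = nth a (morph_iter mu n [:: a]) i.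

Definition factor (A : Type) (w : nat -> A) (i len : nat) : seq A :=
  mkseq (fun j => w (i + j)) len.

Definition aperiodic (A : Type) (w : nat -> A) : Prop :=
  ~ exists p N, 0 < p /\ forall n, N <= n -> w (n + p) = w n.

Definition uniformly_recurrent (A : eqType) (w : nat -> A) : Prop :=
  forall l, exists b, forall i j,
    exists t, t + l <= b /\ factor w (j + t) l = factor w i l.

Definition antipower_at (A : eqType) (w : nat -> A) (i k m : nat) : Prop :=
  forall j1 j2, j1 < k -> j2 < k -> j1 <> j2 ->
    factor w (i + j1 * m) m <> factor w (i + j2 * m) m.

From mathcomp Require Import all_boot zify.
From Stdlib Require Import Classical.
Set Implicit Arguments. Unset Strict Implicit. Unset Printing Implicit Defensive.

(* Let z n := mu^F(w n), where F is large enough that b ~ c iff mu^e(b) = mu^e(c)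
   defines the same partition of A for e = F and e = F + 1.  Then z is still
   uniformly recurrent and aperiodic, and the letter z n both determines and is
   determined by the block z(rn) ... z(rn + r - 1).
   The key step is synchronization: any two occurrences of a long enough factor
   of z start at positions congruent modulo r.  Otherwise some shift 0 < s < r, hence
   also g = gcd(s, r) <= r/2, is ambiguous at every scale: windows starting g
   positions after a block boundary also occur at a block boundary.  Then the
   factors of length r^e + 1 occur at O(g^e) positions, which contradicts the
   Morse-Hedlund bound.  Decoding blocks, factors of length (L + 2) r^e then
   determine their position modulo r^e.
   Given k, take r^e in [k, rk] and blocks of length m = (L + 2) r^e + 1, so that
   m = 1 (mod r^e): two equal blocks of indices j1, j2 < k would start at
   positions congruent modulo r^e, forcing j1 = j2. *)

Section Agreement.
Variables (T : Type) (z : nat -> T).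

Definition agree x y n := forall s, s < n -> z (x + s) = z (y + s).

Lemma agree_factor x y n : factor z x n = factor z y n <-> agree x y n.
Proof.
split=> [E s lt_sn | E].
  by have := congr1 (nth (z 0) ^~ s) E; rewrite /factor !nth_mkseq.
apply: (@eq_from_nth _ (z 0)); rewrite ?size_mkseq // => s lt_sn.
by rewrite !nth_mkseq ?E.
Qed.

Lemma agree_sym x y n : agree x y n -> agree y x n.
Proof. by move=> E s /E ->. Qed.

Lemma agree_trans x y u n : agree x y n -> agree y u n -> agree x u n.
Proof. by move=> Exy Eyu s lt_sn; rewrite Exy // Eyu. Qed.

Lemma agreeW x y n m : m <= n -> agree x y n -> agree x y m.
Proof. by move=> le_mn E s lt_sm; apply: E; lia. Qed.

Lemma agree_shift x y n k m : k + m <= n -> agree x y n -> agree (x + k) (y + k) m.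
Proof. by move=> le_n E s lt_sm; rewrite -!addnA; apply: E; lia. Qed.

Lemma agreeS x y n : agree x y n -> z (x + n) = z (y + n) -> agree x.+1 y.+1 n.
Proof.
move=> E En s lt_sn; rewrite !addSnnS.
have [lt_s1n | ge_s1n] := ltnP s.+1 n; first exact: E.
by have -> : s.+1 = n by lia.
Qed.

Lemma take_factor q n : take n (factor z q n.+1) = factor z q n.
Proof. by rewrite /factor mkseqS -cats1 take_size_cat ?size_mkseq. Qed.

Lemma unique_extension_periodic n i j :
  (forall q q', agree q q' n -> z (q + n) = z (q' + n)) -> i < j -> agree i j n ->
  forall x, i + n <= x -> z (x + (j - i)) = z x.
Proof.
move=> ext lt_ij Eij.
have shifted m : agree (i + m) (j + m) n.
  elim: m => [|m IHm]; first by rewrite !addn0.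
  by rewrite !addnS; apply: agreeS => //; apply: ext.
move=> x le_x; have -> : x = i + (x - i - n) + n by lia.
have -> : i + (x - i - n) + n + (j - i) = j + (x - i - n) + n by lia.
by rewrite (ext _ _ (shifted _)).
Qed.

End Agreement.

(** * Morse-Hedlund bound *)

Section Complexity.
Variables (T : eqType) (z : nat -> T).
Hypothesis z_aper : aperiodic z.

Lemma factor_count_unique_extension n (W : seq (seq T)) :
  (forall q q', agree z q q' n -> z (q + n) = z (q' + n)) ->
  (forall q, factor z q n \in W) -> n.+1 < size W.
Proof.
move=> ext W_cov.
pose S := [seq factor z q n | q <- iota 0 n.+2].
have [S_uniq | ] := boolP (uniq S).
  have S_sub : {subset S <= W} by move=> _ /mapP [q _ ->].
  by have := uniq_leq_size S_uniq S_sub; rewrite size_map size_iota.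
case/(uniqPn [::]) => i [j [lt_ij]]; rewrite size_map size_iota => lt_j.
rewrite !(nth_map 0) ?size_iota ?nth_iota; try lia.
rewrite !add0n => /agree_factor Eij.
case: z_aper; exists (j - i), (i + n); split; first lia.
exact: unique_extension_periodic ext lt_ij Eij.
Qed.

Lemma morse_hedlund n (W : seq (seq T)) : (forall q, factor z q n \in W) -> n < size W.
Proof.
elim: n W => [|n IHn] W W_cov; first by case: W W_cov => // /(_ 0).
apply: leq_trans (size_undup W); set V := undup W.
have V_cov q : factor z q n.+1 \in V by rewrite mem_undup.
have prefix_cov U q : factor z q n.+1 \in U -> factor z q n \in map (take n) U.
  by move=> Uq; rewrite -take_factor; apply: map_f.
have [[q [q' [Eqq' Nqq']]] | no_special] := classic (exists q q',
  factor z q n = factor z q' n /\ factor z q n.+1 <> factor z q' n.+1).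
  (* After dropping one of the two extensions of a right special factor, every
     factor of length n is still a prefix of a remaining factor of length n + 1. *)
  set y := factor z q' n.+1.
  have V_rem q2 : factor z q2 n.+1 != y -> factor z q2 n.+1 \in rem y V.
    by move=> ne_y; rewrite (mem_rem_uniq _ (undup_uniq W)) inE ne_y V_cov.
  suff cov : forall q2, factor z q2 n \in map (take n) (rem y V).
    by have := IHn _ cov; rewrite size_map size_rem ?(V_cov q'); lia.
  move=> q2; have [Ey | ne_y] := eqVneq (factor z q2 n.+1) y; last first.
    by apply: prefix_cov; apply: V_rem.
  rewrite -take_factor Ey take_factor -Eqq'; apply: prefix_cov; apply: V_rem.
  by apply/eqP.
have ext q q' : agree z q q' n -> z (q + n) = z (q' + n).
  move=> /agree_factor Eqq'.
  have Eqq'1 : factor z q n.+1 = factor z q' n.+1.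
    by apply: NNPP => ne; apply: no_special; exists q, q'.
  by have /agree_factor/(_ n (ltnSn n)) := Eqq'1.
have := factor_count_unique_extension (W := map (take n) V) ext.
by rewrite size_map; apply=> q; apply: prefix_cov.
Qed.

End Complexity.

(** * Synchronization *)

Lemma eventually_forall (P : nat -> nat -> Prop) K :
  (forall x, x < K -> exists N, forall n, N <= n -> P x n) ->
  exists N, forall n, N <= n -> forall x, x < K -> P x n.
Proof.
elim: K => [|K IHK] ev; first by exists 0.
have [N1 HN1] := IHK (fun x lt_xK => ev x (leqW lt_xK)).
have [N2 HN2] := ev K (ltnSn K).
exists (maxn N1 N2) => n; rewrite geq_max => /andP [le1 le2] x.
by rewrite ltnS leq_eqVlt => /predU1P [-> | lt_xK]; [apply: HN2 | apply: HN1].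
Qed.

Definition blocks_determined (T : Type) (z : nat -> T) r :=
  forall n n' j, j < r -> z n = z n' -> z (r * n + j) = z (r * n' + j).

Definition blocks_injective (T : Type) (z : nat -> T) r :=
  forall n n', (forall j, j < r -> z (r * n + j) = z (r * n' + j)) -> z n = z n'.

Lemma agree_blocks (T : Type) (z : nat -> T) r x y n :
  blocks_determined z r -> agree z x y n -> agree z (r * x) (r * y) (r * n).
Proof.
move=> z_blocks E s; case: (posnP r) => [-> // | r_gt0] lt_s.
have -> : s = r * (s %/ r) + s %% r by rewrite mulnC -divn_eq.
rewrite !addnA -!mulnDr; apply: z_blocks; first exact: ltn_pmod.
by apply: E; rewrite ltn_divLR // mulnC.
Qed.

Definition synchronizing (T : Type) (z : nat -> T) r L :=
  forall p p', agree z p p' L -> p = p' %[mod r].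

Lemma synchronizingW (T : Type) (z : nat -> T) r L L' :
  L <= L' -> synchronizing z r L -> synchronizing z r L'.
Proof. by move=> le_L sync p p' /(agreeW le_L); apply: sync. Qed.

Lemma synchronizing_comp (T U : Type) (f : T -> U) (w : nat -> T) r L :
  synchronizing (f \o w) r L -> synchronizing w r L.
Proof. by move=> sync p p' E; apply: sync => s /E /= ->. Qed.

Section Synchronization.
Variables (T : eqType) (z : nat -> T) (r : nat).
Hypotheses (r_gt1 : 1 < r) (z_blocks : blocks_determined z r)
  (z_ur : uniformly_recurrent z) (z_aper : aperiodic z).

Let r_gt0 : 0 < r := ltnW r_gt1.

Definition ambiguous_shift s n :=
  forall q, exists q', agree z (r * q') (r * q + s) (r * n).

Lemma ambiguous_shiftW s n n' :
  n <= n' -> ambiguous_shift s n' -> ambiguous_shift s n.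
Proof.
move=> le_n amb q; have [q' E] := amb q.
by exists q'; apply: agreeW E; apply: leq_mul.
Qed.

Lemma aligned_of_not_synchronizing M : ~ synchronizing z r (r * M.+1) ->
  exists t q s, 0 < s < r /\ agree z (r * t) (r * q + s) (r * M).
Proof.
move=> not_sync.
have [p [p' [E ne_mod]]] : exists p p', agree z p p' (r * M.+1) /\ p %% r <> p' %% r.
  apply: NNPP => none; apply: not_sync => p p' E; apply: NNPP => ne_mod.
  by apply: none; exists p, p'.
set D := r - p' %% r.
have p'D : p' + D = r * (p' %/ r).+1.
  by rewrite /D {1}(divn_eq p' r) mulnS mulnC; have := ltn_pmod p' r_gt0; lia.
have pD : r * ((p + D) %/ r) + (p + D) %% r = p + D by rewrite mulnC -divn_eq.
exists (p' %/ r).+1, ((p + D) %/ r), ((p + D) %% r); split.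
  rewrite ltn_pmod // andbT lt0n; apply/eqP => pD0; apply: ne_mod; apply/eqP.
  by rewrite -(eqn_modDr D) pD0 p'D modnMr.
rewrite -p'D pD; apply: agree_shift (agree_sym E).
by rewrite mulnS /D; lia.
Qed.

Lemma ambiguous_shift_exists : (forall L, ~ synchronizing z r L) ->
  forall n, exists2 s, 0 < s < r & ambiguous_shift s n.
Proof.
move=> not_sync n.
have [b Hb] := z_ur n.+1.
have [t [q0 [s [s_range Ets]]]] := aligned_of_not_synchronizing (not_sync (r * (b + n).+1)).
exists s => // q.
have [u [le_ub /agree_factor Eu]] := Hb q q0.
exists (t + u); apply: (@agree_trans _ _ _ (r * (q0 + u) + s)).
  have -> : r * (q0 + u) + s = r * q0 + s + r * u by rewrite mulnDr; lia.
  rewrite mulnDr; apply: agree_shift Ets.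
  by rewrite -mulnDr leq_pmul2l //; lia.
apply: agree_shift (agree_blocks z_blocks Eu).
by rewrite mulnS; case/andP: s_range; lia.
Qed.

Lemma ambiguous_shift_forever : (forall L, ~ synchronizing z r L) ->
  exists2 s, 0 < s < r & forall n, ambiguous_shift s n.
Proof.
move=> not_sync; apply: NNPP => none.
have [N HN] : exists N, forall n, N <= n ->
    forall s, s < r -> ~ (0 < s /\ ambiguous_shift s n).
  apply: eventually_forall => s lt_sr.
  have [-> | s_gt0] := posnP s; first by exists 0 => n _ [].
  have [N notN] : exists N, ~ ambiguous_shift s N.
    apply: NNPP => H; apply: none; exists s; first by rewrite s_gt0.
    by move=> n; apply: NNPP => nH; apply: H; exists n.
  by exists N => n le_Nn [_ amb]; apply: notN; apply: ambiguous_shiftW amb.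
have [s /andP [s_gt0 lt_sr] amb] := ambiguous_shift_exists not_sync N.
exact: HN N (leqnn N) s lt_sr (conj s_gt0 amb).
Qed.

Lemma ambiguous_shift_mul s :
  (forall n, ambiguous_shift s n) -> forall h n, ambiguous_shift (h * s) n.
Proof.
move=> amb; elim=> [|h IHh] n q; first by exists q; rewrite mul0n addn0.
have [q1 E1] := IHh (n + s) q.
have [q' E'] := amb n q1.
exists q'; apply: agree_trans E' _.
rewrite mulSn [s + _]addnC addnA; apply: agree_shift E1.
by rewrite mulnDr addnC leq_add2l leq_pmull.
Qed.

Lemma ambiguous_shift_modr k s : s <= r ->
  (forall n, ambiguous_shift (r * k + s) n) -> forall n, ambiguous_shift s n.
Proof.
move=> le_sr amb n q.
have [b Hb] := z_ur n.+1.
have [u [_ /agree_factor Eu]] := Hb q k.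
have [q' E'] := amb n u.
exists q'; apply: agree_trans E' _.
have -> : r * u + (r * k + s) = r * (k + u) + s by rewrite mulnDr; lia.
by apply: agree_shift (agree_blocks z_blocks Eu); rewrite mulnS; lia.
Qed.

Lemma ambiguous_shift_gcd s : 0 < s ->
  (forall n, ambiguous_shift s n) -> forall n, ambiguous_shift (gcdn s r) n.
Proof.
move=> s_gt0 amb; case: (egcdnP r s_gt0) => ks kr def_g _.
apply: (@ambiguous_shift_modr kr); first exact: dvdn_leq (dvdn_gcdr s r).
by move=> n; rewrite mulnC -def_g; apply: ambiguous_shift_mul.
Qed.

Definition cover (Q : seq nat) n := forall q, exists2 q0, q0 \in Q & agree z q q0 n.

Lemma cover_iota n : exists b, cover (iota 0 b) n.
Proof.
have [b Hb] := z_ur n; exists b.+1 => q.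
have [t [le_b /agree_factor E]] := Hb q 0.
by exists t; [rewrite mem_iota ltnS; lia | apply: agree_sym].
Qed.

Lemma cover_expand g Q n : 0 < g <= r -> (forall h n, ambiguous_shift (h * g) n) ->
  cover Q n.+1 -> cover [seq r * q0 + s | s <- iota 0 g, q0 <- Q] (r * n).+1.
Proof.
move=> /andP [g_gt0 le_gr] amb covQ q.
have lt_s : q %% r %% g < g by rewrite ltn_pmod.
have def_q : q = r * (q %/ r) + (q %% r %/ g) * g + q %% r %% g.
  by rewrite -addnA -divn_eq mulnC -divn_eq.
have [t Et] := amb (q %% r %/ g) n.+1 (q %/ r).
have [q0 Qq0 Eq0] := covQ t.
exists (r * q0 + q %% r %% g).
  by apply: (allpairs_f (fun s q0 => r * q0 + s)); rewrite // mem_iota lt_s.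
rewrite {1}def_q; apply: (@agree_trans _ _ _ (r * t + q %% r %% g)).
  by apply: agree_shift (agree_sym Et); rewrite mulnS; lia.
by apply: agree_shift (agree_blocks z_blocks Eq0); rewrite mulnS; lia.
Qed.

Lemma cover_expn g b : 0 < g <= r -> (forall h n, ambiguous_shift (h * g) n) ->
  cover (iota 0 b) 2 -> forall e, exists2 Q, cover Q (r ^ e).+1 & size Q <= g ^ e * b.
Proof.
move=> g_range amb cov0; elim=> [|e [Q covQ szQ]].
  by exists (iota 0 b); rewrite ?expn0 ?size_iota ?mul1n.
exists [seq r * q0 + s | s <- iota 0 g, q0 <- Q]; first by rewrite expnS; apply: cover_expand.
by rewrite size_allpairs size_iota expnS -mulnA leq_mul2l szQ orbT.
Qed.

Lemma cover_size Q n : cover Q n -> n < size Q.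
Proof.
move=> covQ; rewrite -(size_map (factor z ^~ n)).
apply: (morse_hedlund z_aper) => q.
by have [q0 Qq0 /agree_factor ->] := covQ q; apply: map_f.
Qed.

Theorem synchronizing_length : exists L, synchronizing z r L.
Proof.
apply: NNPP => no_sync.
have not_sync L : ~ synchronizing z r L by move=> sync; apply: no_sync; exists L.
have [s /andP [s_gt0 lt_sr] amb_s] := ambiguous_shift_forever not_sync.
set g := gcdn s r.
have g_gt0 : 0 < g by rewrite gcdn_gt0 s_gt0.
have g_half : 2 * g <= r.
  have [c def_r] := dvdnP (dvdn_gcdr s r).
  have : g < r := leq_ltn_trans (dvdn_leq s_gt0 (dvdn_gcdl s r)) lt_sr.
  by rewrite def_r; case: c {def_r} => [|[|c]]; rewrite ?ltnn //; lia.
have amb_g := ambiguous_shift_mul (ambiguous_shift_gcd s_gt0 amb_s).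
have [b cov0] := cover_iota 2.
have [|Q covQ szQ] := cover_expn _ amb_g cov0 b; first by rewrite g_gt0; lia.
have b_gt0 : 0 < b by have := cover_size cov0; rewrite size_iota; lia.
have lt_gb : g ^ b * b < r ^ b.
  apply: (@leq_trans (g ^ b * 2 ^ b)).
    by rewrite ltn_pmul2l ?expn_gt0 ?g_gt0 // ltn_expl.
  by rewrite mulnC -expnMn leq_exp2r.
by have := leq_ltn_trans (leq_trans (cover_size covQ) szQ) lt_gb; lia.
Qed.

End Synchronization.

Lemma eq_mod_mul p p' d m :
  p = p' %[mod d] -> p %/ d = p' %/ d %[mod m] -> p = p' %[mod m * d].
Proof.
move=> eq_d eq_m.
rewrite (divn_eq p d) (divn_eq p' d) eq_d (divn_eq (p %/ d) m) (divn_eq (p' %/ d) m) eq_m.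
by rewrite !mulnDl -!mulnA -!addnA !modnMDl.
Qed.

Section Lifting.
Variables (T : Type) (z : nat -> T) (r L : nat).
Hypotheses (r_gt1 : 1 < r) (z_inj : blocks_injective z r)
  (z_sync : synchronizing z r L).

Lemma agree_divn_succ p p' Y : p = p' %[mod r] -> agree z p p' (r * Y.+1) ->
  agree z (p %/ r).+1 (p' %/ r).+1 Y.
Proof.
move=> eq_mod E s lt_sY; apply: z_inj => j lt_jr.
have shift x : r * ((x %/ r).+1 + s) + j = x + (r - x %% r + r * s + j).
  by rewrite {2}(divn_eq x r); have := ltn_pmod x (ltnW r_gt1); nia.
by rewrite !shift eq_mod; apply: E; nia.
Qed.

(* The slack 2 absorbs the incomplete blocks at both ends of a window. *)
Lemma synchronizing_expn e : synchronizing z (r ^ e) ((L + 2) * r ^ e - 2).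
Proof.
elim: e => [|e IHe] p p' E; first by rewrite expn0 !modn1.
have re_gt0 : 0 < r ^ e by rewrite expn_gt0 ltnW.
have eq_mod : p = p' %[mod r] by apply: z_sync; apply: agreeW E; rewrite expnS; nia.
have /IHe eq_succ : agree z (p %/ r).+1 (p' %/ r).+1 ((L + 2) * r ^ e - 2).
  by apply: agree_divn_succ eq_mod (agreeW _ E); rewrite expnS; nia.
rewrite expnS mulnC; apply: eq_mod_mul eq_mod _.
by apply/eqP; rewrite -(eqn_modDr 1) !addn1; apply/eqP.
Qed.

End Lifting.

(** * Fixed points of uniform morphisms *)

Section UniformMorphism.
Variables (A : Type) (mu : A -> seq A) (r : nat).
Hypotheses (r_gt0 : 0 < r) (mu_unif : uniform_morphism mu r).

Lemma morph_ext1 b : morph_ext mu [:: b] = mu b.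
Proof. exact: cats0. Qed.

Lemma morph_iterS e u : morph_iter mu e.+1 u = morph_ext mu (morph_iter mu e u).
Proof. exact: iterS. Qed.

Lemma morph_iterSr e u : morph_iter mu e.+1 u = morph_iter mu e (morph_ext mu u).
Proof. exact: iterSr. Qed.

Lemma morph_iterD e e' u : morph_iter mu (e + e') u = morph_iter mu e (morph_iter mu e' u).
Proof. exact: iterD. Qed.

Lemma size_morph_ext u : size (morph_ext mu u) = r * size u.
Proof.
elim: u => [|b u IHu]; first by rewrite muln0.
by rewrite /morph_ext /= size_cat -/(morph_ext mu u) IHu mu_unif mulnS.
Qed.

Lemma size_morph_iter e u : size (morph_iter mu e u) = r ^ e * size u.
Proof.
elim: e u => [|e IHe] u; first by rewrite mul1n.
by rewrite morph_iterS size_morph_ext IHe expnS mulnA.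
Qed.

Lemma nth_morph_ext x0 u i j : i < size u -> j < r ->
  nth x0 (morph_ext mu u) (r * i + j) = nth x0 (mu (nth x0 u i)) j.
Proof.
elim: u i => [|b u IHu] [|i] //= lt_i lt_j; rewrite nth_cat mu_unif -/(morph_ext mu u).
  by rewrite muln0 lt_j.
rewrite ifF; last by apply/negbTE; rewrite -leqNgt mulnS; lia.
by rewrite (_ : _ - r = r * i + j) ?IHu //; rewrite mulnS; lia.
Qed.

Lemma nth_morph_iter x0 e u i j : i < size u -> j < r ^ e ->
  nth x0 (morph_iter mu e u) (r ^ e * i + j) = nth x0 (morph_iter mu e [:: nth x0 u i]) j.
Proof.
elim: e u i j => [|e IHe] u i j lt_i.
  by rewrite expn0 ltnS leqn0 => /eqP ->; rewrite mul1n addn0.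
have re_gt0 : 0 < r ^ e by rewrite expn_gt0 r_gt0.
case: (edivnP j (r ^ e)) => j1 j2 -> /implyP/(_ re_gt0) lt_j2 lt_j.
have lt_j1 : j1 < r by rewrite expnS mulnC in lt_j; nia.
rewrite !morph_iterSr morph_ext1 [j1 * _]mulnC.
have -> : r ^ e.+1 * i + (r ^ e * j1 + j2) = r ^ e * (r * i + j1) + j2.
  by rewrite expnS; lia.
rewrite IHe ?nth_morph_ext ?IHe ?mu_unif ?size_morph_ext //; nia.
Qed.

End UniformMorphism.

Definition morph_letters (A : Type) (mu : A -> seq A) e (w : nat -> A) n :=
  morph_iter mu e [:: w n].

Section FixedPoint.
Variables (A : Type) (mu : A -> seq A) (r : nat) (a : A) (w : nat -> A).
Hypotheses (r_gt1 : 1 < r) (mu_unif : uniform_morphism mu r)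
  (w_fix : is_fixed_point_word mu a w).

Let r_gt0 : 0 < r := ltnW r_gt1.

Lemma size_morph_letters e n : size (morph_letters mu e w n) = r ^ e.
Proof. by rewrite /morph_letters (size_morph_iter mu_unif) muln1. Qed.

Lemma fixed_point_nth e n i : i < r ^ e ->
  w (r ^ e * n + i) = nth a (morph_letters mu e w n) i.
Proof.
move=> lt_i.
have size_a k : size (morph_iter mu k [:: a]) = r ^ k.
  by rewrite (size_morph_iter mu_unif) muln1.
have lt_n : n < r ^ n := ltn_expl n r_gt1.
rewrite (@w_fix (e + n) (r ^ e * n + i)); last by rewrite size_a expnD; nia.
by rewrite morph_iterD (nth_morph_iter r_gt0 mu_unif) ?size_a // -(@w_fix n) ?size_a.
Qed.

Lemma nth_morph_letters_succ e m j i : j < r -> i < r ^ e ->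
  nth a (morph_letters mu e.+1 w m) (r ^ e * j + i) =
  nth a (morph_letters mu e w (r * m + j)) i.
Proof.
move=> lt_j lt_i; rewrite -!fixed_point_nth //; last by rewrite expnS; nia.
by congr w; rewrite expnS; lia.
Qed.

Lemma morph_letters_blocks e : blocks_determined (morph_letters mu e w) r.
Proof.
move=> n n' j lt_j E; apply: (@eq_from_nth _ a); rewrite !size_morph_letters // => i lt_i.
by rewrite -!nth_morph_letters_succ // /morph_letters !morph_iterS -!/(morph_letters mu e w _) E.
Qed.

Lemma morph_letters_injective F :
  (forall b c, morph_iter mu F.+1 [:: b] = morph_iter mu F.+1 [:: c] ->
     morph_iter mu F [:: b] = morph_iter mu F [:: c]) ->
  blocks_injective (morph_letters mu F w) r.
Proof.
move=> stable n n' E; apply: stable.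
apply: (@eq_from_nth _ a); rewrite ?(size_morph_iter mu_unif) // => i lt_i.
have rF_gt0 : 0 < r ^ F by rewrite expn_gt0 r_gt0.
case: (edivnP i (r ^ F)) lt_i => j i0 -> /implyP/(_ rF_gt0) lt_i0 lt_i.
have lt_j : j < r by rewrite muln1 expnS in lt_i; nia.
by rewrite mulnC !nth_morph_letters_succ // E.
Qed.

End FixedPoint.

Lemma uniformly_recurrent_comp (A B : eqType) (f : A -> B) (w : nat -> A) :
  uniformly_recurrent w -> uniformly_recurrent (f \o w).
Proof.
move=> w_ur l; have [b Hb] := w_ur l; exists b => i j.
have [t [le_b /agree_factor E]] := Hb i j; exists t; split=> //.
by apply/agree_factor => s /E /= ->.
Qed.

Lemma aperiodic_of_decoding (T U : Type) (w : nat -> T) (z : nat -> U) K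
    (dec : nat -> U -> T) :
  0 < K -> (forall n i, i < K -> w (K * n + i) = dec i (z n)) ->
  aperiodic w -> aperiodic z.
Proof.
move=> K_gt0 decode w_aper [p [N [p_gt0 per]]]; apply: w_aper.
exists (K * p), (K * N); split=> [|m]; first by rewrite muln_gt0 K_gt0.
case: (edivnP m K) => q i -> /implyP/(_ K_gt0) lt_i le_m.
have le_q : N <= q by nia.
by rewrite mulnC addnAC -mulnDr !decode // per.
Qed.

Lemma increasing_sets_stabilize (T : finType) (S : nat -> {set T}) :
  (forall e, S e \subset S e.+1) -> exists F, S F.+1 \subset S F.
Proof.
move=> incr; apply: NNPP => no_stab.
have grow e : e <= #|S e|.
  elim: e => // e IHe; apply: leq_ltn_trans IHe _; apply: proper_card.
  by rewrite properE incr; apply/negP => sub; apply: no_stab; exists e.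
by have := leq_trans (grow #|T|.+1) (max_card _); rewrite ltnn.
Qed.

Lemma morph_iter_letters_stabilize (A : finType) (mu : A -> seq A) :
  exists F, forall b c, morph_iter mu F.+1 [:: b] = morph_iter mu F.+1 [:: c] ->
    morph_iter mu F [:: b] = morph_iter mu F [:: c].
Proof.
pose S e := [set bc : A * A | morph_iter mu e [:: bc.1] == morph_iter mu e [:: bc.2]].
have [e | F stable] := @increasing_sets_stabilize _ S.
  by apply/subsetP => bc; rewrite !inE !morph_iterS => /eqP ->.
exists F => b c E; apply/eqP.
by have /subsetP/(_ (b, c)) := stable; rewrite !inE E eqxx; apply.
Qed.

(** * Antipowers *)

Lemma exists_expn_between r k : 1 < r -> 0 < k -> exists e, k <= r ^ e <= r * k.
Proof.
move=> r_gt1 k_gt0; exists (trunc_log r k).+1.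
by rewrite (ltnW (trunc_log_ltn _ r_gt1)) expnS leq_mul2l trunc_logP ?orbT.
Qed.

Lemma antipower_of_synchronizing (T : eqType) (w : nat -> T) r M : 1 < r ->
  (forall e, synchronizing w (r ^ e) (M * r ^ e)) ->
  forall k i, 0 < k ->
    exists m, 0 < m /\ m <= (M * r + 1) * k /\ antipower_at w i k m.
Proof.
move=> r_gt1 sync k i k_gt0.
have [e /andP [le_k le_rk]] := exists_expn_between r_gt1 k_gt0.
exists (M * r ^ e + 1); split; first by rewrite addn1.
split; first by have := leq_mul (leqnn M) le_rk; nia.
move=> j1 j2 lt_j1 lt_j2 ne_j /agree_factor/(agreeW (leq_addr 1 _))/sync/eqP.
rewrite eqn_modDl !mulnDr !muln1 !mulnA !modnMDl !modn_small ?(leq_trans _ le_k) //.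
by move/eqP.
Qed.

Theorem theorem5 (A : finType) (mu : A -> seq A) (r : nat) (a : A) (w : nat -> A) :
  2 <= r ->
  uniform_morphism mu r ->
  prolongable_on mu a ->
  is_fixed_point_word mu a w ->
  aperiodic w ->
  uniformly_recurrent w ->
  exists c : nat, forall k i : nat, 0 < k ->
    exists m : nat, 0 < m /\ m <= c * k /\ antipower_at w i k m.
Proof.
move=> r_gt1 mu_unif _ w_fix w_aper w_ur.
have [F stable] := morph_iter_letters_stabilize mu.
pose z := morph_letters mu F w.
have z_ur : uniformly_recurrent z :=
  uniformly_recurrent_comp (fun b => morph_iter mu F [:: b]) w_ur.
have z_aper : aperiodic z.
  apply: (aperiodic_of_decoding (K := r ^ F) (dec := fun i u => nth a u i) _ _ w_aper).
    by rewrite expn_gt0 ltnW.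
  by move=> n i; apply: fixed_point_nth.
have z_blocks : blocks_determined z r :=
  morph_letters_blocks r_gt1 mu_unif w_fix (e := F).
have [L z_sync] := synchronizing_length r_gt1 z_blocks z_ur z_aper.
have z_inj := morph_letters_injective r_gt1 mu_unif w_fix stable.
exists ((L + 2) * r + 1); apply: (antipower_of_synchronizing r_gt1) => e.
apply: (synchronizing_comp (f := fun b => morph_iter mu F [:: b])).
exact: synchronizingW (leq_subr 2 _) (synchronizing_expn r_gt1 z_inj z_sync (e := e)).
Qed.
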